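(* Let $f\in\mathcal{H}_{\rm fin}$ have level $N$ and satisfy the geometric assumptions. If $f(1)\ne0$, then $k(\mathcal{F})\mid N$ (that is, $N/k(\mathcal{F})\in\mathbb{Z}$).
   Context: $\mathcal{H}_{\rm fin}$: locally constant functions on $\mathrm{GL}_2(\mathbb{A}_{\rm fin})$ invariant under and compactly supported modulo the center $Z$. $K=\mathrm{GL}_2(\widehat{\mathbb{Z}})$, $K(N)$ its principal congruence subgroup; the level of $f$ is the minimal $N$ with $f$ bi-$K(N)$-invariant. Geometric assumptions: (i) $f$ is bi-invariant under $\{\mathrm{diag}(u,1):u\in\widehat{\mathbb{Z}}^\times\}$; (ii) $\mathrm{supp}\,f\subseteq a(y)^{-1}ZKa(y)$ for some $y\in\mathbb{Q}_+$, $a(y)=\mathrm{diag}(y,1)$. Kloosterman sums: $H(m_1,m_2;c)=\iint_{\mathbb{A}_{\rm fin}^2}f\big(n(-t_1)\begin{pmatrix}0&-c^{-2}\\1&0\end{pmatrix}n(t_2)\big)\psi_{\rm fin}(m_1t_1-m_2t_2)dt_1dt_2$ for $m_i\in\mathbb{Q}$, $c\in\mathbb{Q}_+$, where $n(x)=\begin{pmatrix}1&x\\0&1\end{pmatrix}$ and $\psi_{\rm fin}=\prod_pe(\{\cdot\}_p)$. A $c\in\mathbb{Q}_+$ is an admissible modulus if $H(\cdot,\cdot;c)\not\equiv0$; the geometric conductor $k(\mathcal{F})\in\mathbb{Q}_+$ is the maximal by divisibility $q'$ such that every admissible modulus lies in $q'\mathbb{Z}$ (it exists under (ii)). *)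

From mathcomp Require Import all_boot all_algebra.
From mathcomp Require Import reals trigo.
From mathcomp.real_closed Require Import complex.
Set Implicit Arguments. Unset Strict Implicit. Unset Printing Implicit Defensive.
Import GRing.Theory Num.Theory.
Local Open Scope ring_scope.

(* A_fin / M*Zhat = Q / M*Z  (strong approximation: A_fin = Q + Zhat,        *)
(* Q cap Zhat = Z), hence A_fin = lim_M Q / M Z.  An adele is encoded as the *)
(* compatible family of its classes modulo M Zhat, M = n.+1, each class      *)
(* being represented by its unique rational representative in [0, M).        *)

Definition in_Z (q : rat) : bool := denq q == 1.

Definition modQ (M : nat) (q : rat) : rat :=
  q - M%:R * (Num.floor (q / M%:R))%:~R.

Definition adl := nat -> rat.   (* raw family: index n <-> modulus n.+1 *)

Definition adele (x : adl) : Prop :=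
  (forall n, 0 <= x n /\ x n < n.+1%:R) /\
  (forall n m, (n.+1 %| m.+1)%N -> in_Z ((x m - x n) / n.+1%:R)).

Definition ofQ (q : rat) : adl := fun n => modQ n.+1 q.

Definition adl_add (x y : adl) : adl := fun n => modQ n.+1 (x n + y n).
Definition adl_opp (x : adl) : adl := fun n => modQ n.+1 (- x n).
Definition adl_sub (x y : adl) : adl := adl_add x (adl_opp y).

(* denominator of the class of x in A_fin / Zhat = Q / Z *)
Definition adl_den (x : adl) : nat := `|denq (x 0%N)|%N.

(* x = r + z, y = s + w (r, s rational, z, w in Zhat):
   xy = xy mod M Zhat is computed from x mod (M den y) and y mod (M den x). *)
Definition adl_mul (x y : adl) : adl :=
  fun n => modQ n.+1 (x (n.+1 * adl_den y).-1 * y (n.+1 * adl_den x).-1).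

Definition adl0 : adl := ofQ 0.
Definition adl1 : adl := ofQ 1.

Definition integral (x : adl) : Prop := x 0%N = 0.
Definition in_MZhat (M : nat) (x : adl) : Prop := x M.-1 = 0.
Definition in_invDZhat (D : nat) (x : adl) : Prop := in_Z (D%:R * x 0%N).

Definition adl_unit (x : adl) : Prop :=
  exists y, adele y /\ adl_mul x y = adl1.
Definition Zhat_unit (x : adl) : Prop :=
  integral x /\ exists y, adele y /\ integral y /\ adl_mul x y = adl1.

(* finite additive character psi_fin = prod_p e({x}_p); since
   sum_p {x}_p = (class of x in Q/Z), psi_fin(x) = e(x mod Zhat). *)
Definition e_ (R : realType) (t : R) : R[i] :=
  Complex (cos (2 * pi * t)) (sin (2 * pi * t)).
Definition psi_fin (R : realType) (x : adl) : R[i] := e_ (ratr (x 0%N)).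

Record mat2 := M2 { m11 : adl; m12 : adl; m21 : adl; m22 : adl }.

Definition mmul (g h : mat2) : mat2 :=
  M2 (adl_add (adl_mul (m11 g) (m11 h)) (adl_mul (m12 g) (m21 h)))
     (adl_add (adl_mul (m11 g) (m12 h)) (adl_mul (m12 g) (m22 h)))
     (adl_add (adl_mul (m21 g) (m11 h)) (adl_mul (m22 g) (m21 h)))
     (adl_add (adl_mul (m21 g) (m12 h)) (adl_mul (m22 g) (m22 h))).

Definition mdet (g : mat2) : adl :=
  adl_sub (adl_mul (m11 g) (m22 g)) (adl_mul (m12 g) (m21 g)).

Definition madele (g : mat2) : Prop :=
  adele (m11 g) /\ adele (m12 g) /\ adele (m21 g) /\ adele (m22 g).

Definition GL2 (g : mat2) : Prop := madele g /\ adl_unit (mdet g).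

Definition center (z : mat2) : Prop :=
  exists u, adele u /\ adl_unit u /\ z = M2 u adl0 adl0 u.

Definition Kmax (k : mat2) : Prop :=
  madele k /\ integral (m11 k) /\ integral (m12 k) /\ integral (m21 k)
  /\ integral (m22 k) /\ Zhat_unit (mdet k).

Definition KN (N : nat) (k : mat2) : Prop :=
  Kmax k /\ in_MZhat N (adl_sub (m11 k) adl1) /\ in_MZhat N (m12 k)
  /\ in_MZhat N (m21 k) /\ in_MZhat N (adl_sub (m22 k) adl1).

Definition mat1 : mat2 := M2 adl1 adl0 adl0 adl1.
Definition nmat (x : adl) : mat2 := M2 adl1 x adl0 adl1.
Definition amat (y : rat) : mat2 := M2 (ofQ y) adl0 adl0 adl1.
Definition dmat (u : adl) : mat2 := M2 u adl0 adl0 adl1.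
Definition wmat (c : rat) : mat2 :=
  M2 adl0 (adl_opp (ofQ (c ^- 2))) adl1 adl0.

Definition bi_inv (P : mat2 -> Prop) (R : realType) (f : mat2 -> R[i]) :=
  forall g k1 k2, GL2 g -> P k1 -> P k2 -> f (mmul k1 (mmul g k2)) = f g.

Definition in_Hfin (R : realType) (f : mat2 -> R[i]) : Prop :=
  (forall z g, center z -> GL2 g -> f (mmul z g) = f g) /\
  (* locally constant (smooth): bi-invariant under some open K(M) *)
  (exists M, (0 < M)%N /\ bi_inv (KN M) f) /\
  (* compactly supported modulo Z: support in Z * (finite union of g_i K) *)
  (exists (n : nat) (gs : 'I_n -> mat2), (forall i, GL2 (gs i)) /\
     forall g, GL2 g -> f g != 0 ->
       exists z i k, center z /\ Kmax k /\ g = mmul z (mmul (gs i) k)).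

Definition has_level (R : realType) (f : mat2 -> R[i]) (N : nat) : Prop :=
  (0 < N)%N /\ bi_inv (KN N) f /\
  forall M, (0 < M)%N -> bi_inv (KN M) f -> (N <= M)%N.

Definition geom_i (R : realType) (f : mat2 -> R[i]) : Prop :=
  bi_inv (fun k => exists u, adele u /\ Zhat_unit u /\ k = dmat u) f.

Definition geom_ii (R : realType) (f : mat2 -> R[i]) : Prop :=
  exists y : rat, 0 < y /\
    forall g, GL2 g -> f g != 0 ->
      exists z k, center z /\ Kmax k /\
        g = mmul (amat y^-1) (mmul z (mmul k (amat y))).

(* Haar integral on A_fin^2 (dt normalized by vol(Zhat) = 1) of a locally    *)
(* constant compactly supported g: if g is (M Zhat)^2-invariant and supported *)
(* in (D^{-1} Zhat)^2, the cosets of M Zhat in D^{-1}Zhat are represented by  *)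
(* k/D, 0 <= k < MD, each of volume 1/M.                                      *)
Definition HaarInt2 (R : realType) (g : adl -> adl -> R[i]) (I : R[i]) : Prop :=
  exists M D : nat, (0 < M)%N /\ (0 < D)%N /\
    (forall t1 t2 u1 u2, adele t1 -> adele t2 -> adele u1 -> adele u2 ->
        in_MZhat M u1 -> in_MZhat M u2 ->
        g (adl_add t1 u1) (adl_add t2 u2) = g t1 t2) /\
    (forall t1 t2, adele t1 -> adele t2 -> g t1 t2 != 0 ->
        in_invDZhat D t1 /\ in_invDZhat D t2) /\
    I = (M ^ 2)%:R^-1 *
        \sum_(k1 < M * D) \sum_(k2 < M * D)
           g (ofQ (k1%:R / D%:R)) (ofQ (k2%:R / D%:R)).

Definition Kloosterman (R : realType) (f : mat2 -> R[i]) (m1 m2 c : rat)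
  (I : R[i]) : Prop :=
  HaarInt2 (fun t1 t2 =>
     f (mmul (nmat (adl_opp t1)) (mmul (wmat c) (nmat t2))) *
     psi_fin R (adl_sub (adl_mul (ofQ m1) t1) (adl_mul (ofQ m2) t2))) I.

Definition admissible (R : realType) (f : mat2 -> R[i]) (c : rat) : Prop :=
  0 < c /\ exists m1 m2 I, Kloosterman f m1 m2 c I /\ I != 0.

Definition divides_moduli (R : realType) (f : mat2 -> R[i]) (q : rat) : Prop :=
  0 < q /\ forall c, admissible f c -> in_Z (c / q).

Definition geom_conductor (R : realType) (f : mat2 -> R[i]) (k : rat) : Prop :=
  divides_moduli f k /\ forall q, divides_moduli f q -> in_Z (k / q).

From mathcomp Require Import all_boot all_order all_algebra.
From mathcomp Require Import reals trigo.
From mathcomp.real_closed Require Import complex.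
From HB Require Import structures.
From mathcomp Require Import zify ring lra.
From mathcomp Require Import boolp.
Set Implicit Arguments. Unset Strict Implicit. Unset Printing Implicit Defensive.
Import Order.TTheory GRing.Theory Num.Theory.
Local Open Scope ring_scope.

(* The level N is itself an admissible modulus, hence a multiple of k(F).
   Choose D so that, by (ii), the Kloosterman integrand for c = N is supported
   in (D^-1 Zhat)^2; by bi-K(N)-invariance it is (N Zhat)^2-periodic. Then
   N^2 H(j1/N, -j2/N; N) is the discrete Fourier coefficient of index (j1, j2)
   on (Z/nZ)^2, n = N D, of F(k1, k2) = f(n(-k1/D) w(N) n(k2/D)). If all these
   sums vanished, Fourier inversion would give F = 0. But for t1 = -1/N and
   t2 = 1/N modulo N, n(-t1) w(N) n(t2) lies in Z K(N), so F takes the value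
   f(1) <> 0 there. *)

Lemma in_ZE (q : rat) : in_Z q = (q \is a Num.int).
Proof. by rewrite Qint_def. Qed.

Definition congQ (L : nat) (a b : rat) : Prop := (a - b) / L%:R \is a Num.int.

Lemma congQP L a b :
  (0 < L)%N -> congQ L a b <-> exists z : int, a = b + L%:R * z%:~R.
Proof.
move=> L0; have LQ : (L%:R : rat) != 0 by rewrite pnatr_eq0 -lt0n.
rewrite /congQ; split=> [/intrP[z hz]|[z ->]]; last first.
  by rewrite addrAC subrr add0r mulrC mulKf // intr_int.
by exists z; rewrite -hz mulrC divfK // addrC subrK.
Qed.

Lemma congQ_refl L a : congQ L a a.
Proof. by rewrite /congQ subrr mul0r. Qed.

Lemma congQ_sym L a b : congQ L a b -> congQ L b a.
Proof. by rewrite /congQ -opprB mulNr rpredN. Qed.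

Lemma congQ_trans L a b c : congQ L a b -> congQ L b c -> congQ L a c.
Proof.
rewrite /congQ => hab hbc.
have -> : (a - c) / L%:R = (a - b) / L%:R + (b - c) / L%:R.
  by rewrite -mulrDl addrA subrK.
exact: rpredD.
Qed.

Lemma congQD L a b c d : congQ L a b -> congQ L c d -> congQ L (a + c) (b + d).
Proof. by rewrite /congQ => hab hcd; rewrite opprD addrACA mulrDl rpredD. Qed.

Lemma congQN L a b : congQ L a b -> congQ L (- a) (- b).
Proof. by rewrite /congQ -opprD mulNr rpredN. Qed.

Lemma congQ_dvd K L a b : (0 < L)%N -> (K %| L)%N -> congQ L a b -> congQ K a b.
Proof.
move=> L0 /dvdnP[m def_L]; have K0 : (0 < K)%N by move: L0; rewrite def_L muln_gt0 => /andP[].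
move/(congQP _ _ L0) => [z ->]; apply/(congQP _ _ K0); exists (m%:Z * z).
by rewrite def_L natrM rmorphM /= mulrCA mulrA.
Qed.

Lemma congQ1 a b : congQ 1 a b <-> a - b \is a Num.int.
Proof. by rewrite /congQ divr1. Qed.

Lemma congQ_eq L a b : 0 <= a < L%:R -> 0 <= b < L%:R -> congQ L a b -> a = b.
Proof.
move=> /andP[a0 aL] /andP[b0 bL].
have L0 : (0 < L)%N by rewrite -(ltr0n rat) (le_lt_trans a0).
move/(congQP _ _ L0) => [z def_a]; have LQ : (0 : rat) < L%:R by rewrite ltr0n.
suff z0 : z = 0 by rewrite def_a z0 mulr0 addr0.
have z_lt1 : L%:R * z%:~R < L%:R * 1 :> rat.
  by rewrite mulr1 -(ltrD2l b) -def_a (lt_le_trans aL) // lerDr.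
have z_gtN1 : L%:R * (-1) < L%:R * z%:~R :> rat.
  by rewrite mulrN1 -(ltrD2l b) -def_a (lt_le_trans _ a0) // subr_lt0.
rewrite ltr_pM2l // -[1]/(1%:~R) ltr_int in z_lt1.
rewrite ltr_pM2l // -[-1]/((-1)%:~R) ltr_int in z_gtN1.
lia.
Qed.

Lemma modQ_congQ L q : (0 < L)%N -> congQ L (modQ L q) q.
Proof.
by move=> L0; apply/(congQP _ _ L0); exists (- Num.floor (q / L%:R)); rewrite rmorphN mulrN.
Qed.

Lemma modQ_itv L q : (0 < L)%N -> 0 <= modQ L q < L%:R.
Proof.
move=> L0; have LQ : (0 : rat) < L%:R by rewrite ltr0n.
rewrite /modQ subr_ge0 ltrBlDl -ler_pdivlMl // mulrC floor_le /=.
by rewrite -[X in _ < _ + X]mulr1 -mulrDr -ltr_pdivrMl // mulrC -[1]/(1%:~R) -intrD floorD1_gt.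
Qed.

Lemma modQ_id L a : 0 <= a < L%:R -> modQ L a = a.
Proof.
move=> ha; have L0 : (0 < L)%N by case/andP: ha => a0 aL; rewrite -(ltr0n rat) (le_lt_trans a0).
by apply: (congQ_eq (modQ_itv _ L0) ha); apply: modQ_congQ.
Qed.

(** * Finite adeles *)

(* [approx x L a]: the rational [a] represents the class of [x] modulo [L Zhat]. *)
Definition approx (x : adl) (L : nat) (a : rat) : Prop := congQ L (x L.-1) a.

Lemma adele_itv x n : adele x -> 0 <= x n < n.+1%:R.
Proof. by case=> itv _; apply/andP; apply: itv. Qed.

Lemma approx_self x L : approx x L (x L.-1).
Proof. exact: congQ_refl. Qed.

Lemma approx_dvd x K L a : adele x -> (0 < K)%N -> (0 < L)%N -> (K %| L)%N ->
  approx x L a -> approx x K a.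
Proof.
move=> [_ compat] K0 L0 KL /(congQ_dvd L0 KL) hL; apply: congQ_trans _ hL.
by move: (compat K.-1 L.-1); rewrite !prednK // => /(_ KL)/congQ_sym.
Qed.

Lemma approx_val x K L : adele x -> (0 < K)%N -> (0 < L)%N -> (K %| L)%N ->
  approx x K (x L.-1).
Proof. by move=> ax K0 L0 KL; apply: approx_dvd ax K0 L0 KL (approx_self _ _). Qed.

Lemma approx_ofQ q L : (0 < L)%N -> approx (ofQ q) L q.
Proof. by move=> L0; rewrite /approx /ofQ prednK //; apply: modQ_congQ. Qed.

Lemma adl_den_gt0 x : (0 < adl_den x)%N.
Proof. by rewrite absz_gt0 denq_neq0. Qed.

Lemma invDZhat_den x : in_invDZhat (adl_den x) x.
Proof.
rewrite /in_invDZhat /adl_den natr_absz gtr0_norm ?denq_gt0 // mulrC -numqE.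
by rewrite in_ZE intr_int.
Qed.

Lemma invDZhat_approx x D L a : adele x -> in_invDZhat D x -> (0 < L)%N ->
  approx x L a -> D%:R * a \is a Num.int.
Proof.
move=> ax; rewrite /in_invDZhat in_ZE => hD L0 /(approx_dvd ax (ltn0Sn 0) L0 (dvd1n L)).
move=> /congQ1 ha; have -> : a = x 0%N - (x 0%N - a) by ring.
by rewrite mulrBr rpredB // rpredM // natr_int.
Qed.

Lemma invDZhat_approx1 x D r : D%:R * r \is a Num.int -> approx x 1 r -> in_invDZhat D x.
Proof.
rewrite /in_invDZhat in_ZE => hr /congQ1 hx.
by rewrite -[x 0%N](subrK r) mulrDr rpredD // rpredM // natr_int.
Qed.

Lemma denq_dvd q D : (0 < D)%N -> D%:R * q \is a Num.int -> (`|denq q| %| D)%N.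
Proof.
move=> D0 /intrP[m def_m].
have e : (D%:Z * numq q = m * denq q)%R.
  by apply: (@intr_inj rat); rewrite !rmorphM /= numqE mulrA -def_m.
have : (`|denq q| %| D * `|numq q|)%N.
  by apply/dvdnP; exists `|m|%N; rewrite -abszM -[(D * _)%N]/(`|D%:Z| * `|numq q|)%N -abszM e.
by rewrite Gauss_dvdl // coprime_sym coprime_num_den.
Qed.

Lemma invDZhat_den_dvd x D : (0 < D)%N -> in_invDZhat D x -> (adl_den x %| D)%N.
Proof. by rewrite /in_invDZhat in_ZE; apply: denq_dvd. Qed.

(* With X = a + L dy i and Y = b + L dx j:
   X Y - a b = L ((dx a) j + (dy b) i + L dx dy i j). *)
Lemma congQ_mul L dx dy X Y a b : (0 < L)%N -> (0 < dx)%N -> (0 < dy)%N ->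
  congQ (L * dy) X a -> congQ (L * dx) Y b ->
  dx%:R * a \is a Num.int -> dy%:R * b \is a Num.int -> congQ L (X * Y) (a * b).
Proof.
move=> L0 dx0 dy0; have Ldy : (0 < L * dy)%N by rewrite muln_gt0 L0.
have Ldx : (0 < L * dx)%N by rewrite muln_gt0 L0.
move=> /(congQP _ _ Ldy)[i ->] /(congQP _ _ Ldx)[j ->] /intrP[za def_a] /intrP[zb def_b].
apply/(congQP _ _ L0); exists (za * j + zb * i + L%:Z * dx%:Z * dy%:Z * i * j)%R.
rewrite !rmorphD !rmorphM /= -def_a -def_b.
rewrite -[(L%:Z)%:~R]/(L%:R : rat) -[(dx%:Z)%:~R]/(dx%:R : rat) -[(dy%:Z)%:~R]/(dy%:R : rat).
ring.
Qed.

Lemma approx_add x y L a b : (0 < L)%N ->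
  approx x L a -> approx y L b -> approx (adl_add x y) L (a + b).
Proof.
move=> L0 hx hy; rewrite /approx /adl_add prednK //.
exact: congQ_trans (modQ_congQ _ L0) (congQD hx hy).
Qed.

Lemma approx_opp x L a : (0 < L)%N -> approx x L a -> approx (adl_opp x) L (- a).
Proof.
move=> L0 hx; rewrite /approx /adl_opp prednK //.
exact: congQ_trans (modQ_congQ _ L0) (congQN hx).
Qed.

Section AdeleMul.
Variables (x y : adl).
Hypotheses (ax : adele x) (ay : adele y).
Local Notation dx := (adl_den x).
Local Notation dy := (adl_den y).

Lemma congQ_adl_mul L a b : (0 < L)%N ->
  approx x (L * dy) a -> approx y (L * dx) b ->
  congQ L (x (L * dy).-1 * y (L * dx).-1) (a * b).
Proof.
move=> L0 ha hb; have Ldy : (0 < L * dy)%N by rewrite muln_gt0 L0 adl_den_gt0.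
have Ldx : (0 < L * dx)%N by rewrite muln_gt0 L0 adl_den_gt0.
have hxa := invDZhat_approx ax (invDZhat_den x) Ldy ha.
have hyb := invDZhat_approx ay (invDZhat_den y) Ldx hb.
exact: congQ_mul (adl_den_gt0 x) (adl_den_gt0 y) ha hb hxa hyb.
Qed.

End AdeleMul.

Lemma adele_modQ (r : nat -> rat) :
  (forall n m, (n.+1 %| m.+1)%N -> congQ n.+1 (r m) (r n)) ->
  adele (fun n => modQ n.+1 (r n)).
Proof.
move=> compat; split=> [n|n m nm]; first by apply/andP; apply: modQ_itv.
apply: congQ_trans (congQ_dvd _ nm (modQ_congQ _ _)) _ => //.
apply: congQ_trans (compat _ _ nm) _; exact/congQ_sym/modQ_congQ.
Qed.

Lemma adele_add x y : adele x -> adele y -> adele (adl_add x y).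
Proof.
move=> [_ cx] [_ cy]; apply: adele_modQ => n m nm.
by apply: congQD; [apply: cx | apply: cy].
Qed.

Lemma adele_opp x : adele x -> adele (adl_opp x).
Proof. by move=> [_ cx]; apply: adele_modQ => n m nm; apply/congQN/cx. Qed.

Lemma adele_ofQ q : adele (ofQ q).
Proof. by apply: adele_modQ => n m _; apply: congQ_refl. Qed.

Lemma adele_mul x y : adele x -> adele y -> adele (adl_mul x y).
Proof.
move=> ax ay; apply: adele_modQ => n m nm.
by apply/congQ_sym/congQ_adl_mul => //; apply: approx_val; rewrite ?muln_gt0 ?adl_den_gt0 ?dvdn_mul.
Qed.

Lemma adele_ext x y : adele x -> adele y ->
  (forall L, (0 < L)%N -> exists r, approx x L r /\ approx y L r) -> x = y.
Proof.
move=> ax ay h; apply: funext => n; have [r [hx hy]] := h n.+1 isT.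
exact: congQ_eq (adele_itv n ax) (adele_itv n ay) (congQ_trans hx (congQ_sym hy)).
Qed.

Lemma invDZhat_add x y Dx Dy : in_invDZhat Dx x -> in_invDZhat Dy y ->
  in_invDZhat (Dx * Dy) (adl_add x y).
Proof.
rewrite /in_invDZhat !in_ZE => hx hy.
apply: (invDZhat_approx1 (r := x 0%N + y 0%N)).
  rewrite natrM mulrDr rpredD //; first by rewrite mulrAC rpredM // natr_int.
  by rewrite -mulrA rpredM // natr_int.
exact: approx_add (ltn0Sn 0) (approx_self x 1) (approx_self y 1).
Qed.

Lemma invDZhat_opp x D : in_invDZhat D x -> in_invDZhat D (adl_opp x).
Proof.
rewrite /in_invDZhat !in_ZE => hx.
apply: (invDZhat_approx1 (r := - x 0%N)); first by rewrite mulrN rpredN.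
exact: approx_opp (ltn0Sn 0) (approx_self x 1).
Qed.

Definition Afin := {x : adl | adele x}.
HB.instance Definition _ := gen_eqMixin Afin.
HB.instance Definition _ := gen_choiceMixin Afin.

Local Notation den x := (adl_den (sval x)).

Definition Aadd (x y : Afin) : Afin := exist _ _ (adele_add (svalP x) (svalP y)).
Definition Aopp (x : Afin) : Afin := exist _ _ (adele_opp (svalP x)).
Definition Amul (x y : Afin) : Afin := exist _ _ (adele_mul (svalP x) (svalP y)).
Definition Aq (q : rat) : Afin := exist _ _ (adele_ofQ q).

Lemma Afin_inj (x y : Afin) : sval x = sval y -> x = y.
Proof. by case: x y => [x ax] [y ay] /= exy; subst y; rewrite (Prop_irrelevance ax ay). Qed.

Lemma Afin_ext (x y : Afin) :
  (forall L, (0 < L)%N -> exists r, approx (sval x) L r /\ approx (sval y) L r) -> x = y.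
Proof. by move=> h; apply/Afin_inj/adele_ext => //; apply: svalP. Qed.

Lemma approx_Afin (x : Afin) K L : (0 < L)%N -> (K %| L)%N ->
  approx (sval x) K (sval x L.-1).
Proof.
move=> L0 KL; have K0 : (0 < K)%N by apply: dvdn_gt0 L0 KL.
exact: approx_val (svalP x) K0 L0 KL.
Qed.

Lemma approx_Amul (x y : Afin) L a b : (0 < L)%N ->
  approx (sval x) (L * den y) a -> approx (sval y) (L * den x) b ->
  approx (sval (Amul x y)) L (a * b).
Proof.
move=> L0 ha hb; rewrite /approx /= /adl_mul prednK //.
exact: congQ_trans (modQ_congQ _ L0) (congQ_adl_mul (svalP x) (svalP y) L0 ha hb).
Qed.

Lemma invDZhat_Amul (x y : Afin) Dx Dy : in_invDZhat Dx (sval x) -> in_invDZhat Dy (sval y) ->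
  in_invDZhat (Dx * Dy) (sval (Amul x y)).
Proof.
move=> hx hy; set a := sval x (1 * den y).-1; set b := sval y (1 * den x).-1.
have Ly : (0 < 1 * den y)%N by rewrite mul1n adl_den_gt0.
have Lx : (0 < 1 * den x)%N by rewrite mul1n adl_den_gt0.
have ha := invDZhat_approx (svalP x) hx Ly (approx_self _ _).
have hb := invDZhat_approx (svalP y) hy Lx (approx_self _ _).
apply: (invDZhat_approx1 (r := a * b)); first by rewrite natrM mulrACA rpredM.
exact: approx_Amul (ltn0Sn 0) (approx_self _ _) (approx_self _ _).
Qed.

Lemma den_Aadd (x y : Afin) : (den (Aadd x y) %| den x * den y)%N.
Proof.
apply: invDZhat_den_dvd; first by rewrite muln_gt0 !adl_den_gt0.
exact: invDZhat_add (invDZhat_den _) (invDZhat_den _).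
Qed.

Lemma den_Amul (x y : Afin) : (den (Amul x y) %| den x * den y)%N.
Proof.
apply: invDZhat_den_dvd; first by rewrite muln_gt0 !adl_den_gt0.
exact: invDZhat_Amul (invDZhat_den _) (invDZhat_den _).
Qed.

Lemma AaddC : commutative Aadd.
Proof.
move=> x y; apply: Afin_ext => L L0; exists (sval x L.-1 + sval y L.-1).
by split; [|rewrite addrC]; apply: approx_add => //; apply: approx_self.
Qed.

Lemma AaddA : associative Aadd.
Proof.
move=> x y z; apply: Afin_ext => L L0.
exists (sval x L.-1 + sval y L.-1 + sval z L.-1); split; last first.
  apply: approx_add => //; last exact: approx_self.
  by apply: approx_add => //; apply: approx_self.
rewrite -addrA; apply: approx_add => //; first exact: approx_self.
by apply: approx_add => //; apply: approx_self.
Qed.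

Lemma Aadd0 : left_id (Aq 0) Aadd.
Proof.
move=> x; apply: Afin_ext => L L0; exists (sval x L.-1); split; last exact: approx_self.
by rewrite -[X in approx _ _ X]add0r; apply: approx_add (approx_ofQ _ L0) (approx_self _ _).
Qed.

Lemma AaddNl : left_inverse (Aq 0) Aopp Aadd.
Proof.
move=> x; apply: Afin_ext => L L0; exists 0; split; last exact: approx_ofQ.
rewrite -(addNr (sval x L.-1)).
exact: approx_add L0 (approx_opp L0 (approx_self _ _)) (approx_self _ _).
Qed.

HB.instance Definition _ := GRing.isZmodule.Build Afin AaddA AaddC Aadd0 AaddNl.

(* Every identity is checked modulo L Zhat on the values of the factors at a
   level Lb divisible by L times all the relevant denominators. *)
Lemma AmulC : commutative Amul.
Proof.
move=> x y; apply: Afin_ext => L L0; set Lb := (L * den x * den y)%N.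
have Lb0 : (0 < Lb)%N by rewrite !muln_gt0 L0 !adl_den_gt0.
have Lx : (L * den x %| Lb)%N by apply/dvdnP; exists (den y); rewrite /Lb; ring.
have Ly : (L * den y %| Lb)%N by apply/dvdnP; exists (den x); rewrite /Lb; ring.
exists (sval x Lb.-1 * sval y Lb.-1); split; last rewrite mulrC.
  by apply: approx_Amul => //; apply: approx_Afin.
by apply: approx_Amul => //; apply: approx_Afin.
Qed.

Lemma AmulA : associative Amul.
Proof.
move=> x y z; apply: Afin_ext => L L0; set Lb := (L * den x * den y * den z)%N.
have Lb0 : (0 < Lb)%N by rewrite !muln_gt0 L0 !adl_den_gt0.
have Ld (d : Afin) : (0 < L * den d)%N by rewrite muln_gt0 L0 adl_den_gt0.
exists (sval x Lb.-1 * sval y Lb.-1 * sval z Lb.-1); split.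
  rewrite -mulrA; apply: approx_Amul => //.
    apply: approx_Afin Lb0 (dvdn_trans (dvdn_mul (dvdnn L) (den_Amul y z)) _).
    by apply/dvdnP; exists (den x); rewrite /Lb; ring.
  apply: approx_Amul => //; apply: approx_Afin Lb0 _; apply/dvdnP.
    by exists (den y); rewrite /Lb; ring.
  by exists (den z); rewrite /Lb; ring.
apply: approx_Amul => //; last first.
  apply: approx_Afin Lb0 (dvdn_trans (dvdn_mul (dvdnn L) (den_Amul x y)) _).
  by apply/dvdnP; exists (den z); rewrite /Lb; ring.
apply: approx_Amul => //; apply: approx_Afin Lb0 _; apply/dvdnP.
  by exists (den x); rewrite /Lb; ring.
by exists (den y); rewrite /Lb; ring.
Qed.

Lemma Amul1 : left_id (Aq 1) Amul.
Proof.
move=> x; apply: Afin_ext => L L0; set Lb := (L * den (Aq 1) * den x)%N.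
have Lb0 : (0 < Lb)%N by rewrite !muln_gt0 L0 !adl_den_gt0.
exists (sval x Lb.-1); split; last first.
  by apply: approx_Afin Lb0 _; apply/dvdnP; exists (den (Aq 1) * den x)%N; rewrite /Lb; ring.
rewrite -[X in approx _ _ X]mul1r; apply: approx_Amul => //.
  by apply: approx_ofQ; rewrite muln_gt0 L0 adl_den_gt0.
by apply: approx_Afin Lb0 _; apply/dvdnP; exists (den x); rewrite /Lb; ring.
Qed.

Lemma AmulDl : left_distributive Amul Aadd.
Proof.
move=> x y z; apply: Afin_ext => L L0; set Lb := (L * den x * den y * den z)%N.
have Lb0 : (0 < Lb)%N by rewrite !muln_gt0 L0 !adl_den_gt0.
have Lz : (0 < L * den z)%N by rewrite muln_gt0 L0 adl_den_gt0.
set a := sval x Lb.-1; set b := sval y Lb.-1; set c := sval z Lb.-1.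
exists ((a + b) * c); split.
  apply: approx_Amul => //.
    apply: approx_add Lz _ _; apply: approx_Afin Lb0 _; apply/dvdnP.
      by exists (den x * den y)%N; rewrite /Lb; ring.
    by exists (den x * den y)%N; rewrite /Lb; ring.
  apply: approx_Afin Lb0 (dvdn_trans (dvdn_mul (dvdnn L) (den_Aadd x y)) _).
  by apply/dvdnP; exists (den z); rewrite /Lb; ring.
rewrite mulrDl; apply: approx_add => //; apply: approx_Amul => //;
  apply: approx_Afin Lb0 _; apply/dvdnP.
- by exists (den x * den y)%N; rewrite /Lb; ring.
- by exists (den y * den z)%N; rewrite /Lb; ring.
- by exists (den x * den y)%N; rewrite /Lb; ring.
- by exists (den x * den z)%N; rewrite /Lb; ring.
Qed.

Lemma Aq1_neq0 : Aq 1 != Aq 0.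
Proof. by apply/eqP => /(congr1 (fun u => sval u 1%N)); rewrite /= /ofQ !modQ_id. Qed.

HB.instance Definition _ :=
  GRing.Zmodule_isComNzRing.Build Afin AmulA AmulC Amul1 AmulDl Aq1_neq0.

Lemma Aq_is_zmod_morphism : zmod_morphism Aq.
Proof.
move=> a b; apply: Afin_ext => L L0; exists (a - b); split; first exact: approx_ofQ.
exact: approx_add L0 (approx_ofQ _ L0) (approx_opp L0 (approx_ofQ _ L0)).
Qed.

Lemma Aq_is_monoid_morphism : monoid_morphism Aq.
Proof.
split=> // a b; apply: Afin_ext => L L0; exists (a * b); split; first exact: approx_ofQ.
by apply: approx_Amul => //; apply: approx_ofQ; rewrite muln_gt0 L0 adl_den_gt0.
Qed.

HB.instance Definition _ := GRing.isZmodMorphism.Build rat Afin Aq Aq_is_zmod_morphism.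
HB.instance Definition _ := GRing.isMonoidMorphism.Build rat Afin Aq Aq_is_monoid_morphism.

Definition Zhat : {pred Afin} := fun x => sval x 0%N == 0.

Lemma ZhatP (x : Afin) : reflect (in_invDZhat 1 (sval x)) (x \in Zhat).
Proof.
rewrite /in_invDZhat mul1r in_ZE; apply: (iffP eqP) => [->|x0_int]; first exact: rpred0.
apply: (congQ_eq (L := 1)); first exact: adele_itv (svalP x).
  by rewrite lexx ltr01.
by apply/congQ1; rewrite subr0.
Qed.

Lemma Zhat_subring_closed : subring_closed Zhat.
Proof.
split=> [|x y /ZhatP hx /ZhatP hy|x y /ZhatP hx /ZhatP hy]; apply/ZhatP.
- apply: (invDZhat_approx1 (r := 1)); first by rewrite mul1r rpred1.
  exact: approx_ofQ.
- exact: invDZhat_add hx (invDZhat_opp hy).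
- exact: invDZhat_Amul hx hy.
Qed.

HB.instance Definition _ := GRing.isSubringClosed.Build Afin Zhat Zhat_subring_closed.

Definition MZhat (M : nat) : {pred Afin} := fun x => sval x M.-1 == 0.

Lemma MZhatP M (x : Afin) : (0 < M)%N -> reflect (approx (sval x) M 0) (x \in MZhat M).
Proof.
move=> M0; apply: (iffP eqP) => [x0|hx]; first by rewrite /approx x0; apply: congQ_refl.
apply: (congQ_eq (L := M)) hx; last by rewrite lexx ltr0n.
by have := adele_itv M.-1 (svalP x); rewrite prednK.
Qed.

Lemma MZhat_Zhat M (x : Afin) : (0 < M)%N -> x \in MZhat M -> x \in Zhat.
Proof.
move=> M0 /(MZhatP _ M0) /(approx_dvd (svalP x) (ltn0Sn 0) M0 (dvd1n M)) hx.
by apply/ZhatP/(invDZhat_approx1 (r := 0)); rewrite ?mulr0 ?rpred0.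
Qed.

Lemma MZhat0 M : (0 < M)%N -> 0 \in MZhat M.
Proof. by move=> M0; apply/MZhatP/approx_ofQ. Qed.

Lemma MZhatN M (x : Afin) : (0 < M)%N -> x \in MZhat M -> - x \in MZhat M.
Proof. by move=> M0 /(MZhatP _ M0) hx; apply/(MZhatP _ M0); rewrite -oppr0; apply: approx_opp. Qed.

Lemma Aq_MZhat M (z : int) : (0 < M)%N -> Aq (M%:R * z%:~R) \in MZhat M.
Proof.
move=> M0; apply/(MZhatP _ M0)/(congQ_trans (approx_ofQ _ M0)).
by apply/(congQP _ _ M0); exists z; rewrite add0r.
Qed.

Lemma Aq_mul_MZhat_Zhat q M (u : Afin) : (0 < M)%N -> M%:R * q \is a Num.int ->
  u \in MZhat M -> Aq q * u \in Zhat.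
Proof.
move=> M0 Mq /(MZhatP _ M0) hu.
have den_q : (den (Aq q) %| M)%N.
  by apply: invDZhat_den_dvd M0 (invDZhat_approx1 Mq (approx_ofQ _ (ltn0Sn 0))).
have hu1 : approx (sval u) (1 * den (Aq q)) 0.
  by rewrite mul1n; apply: approx_dvd (svalP u) (adl_den_gt0 _) M0 den_q hu.
have q_u : approx (sval (Aq q * u)) 1 (q * 0).
  by apply: approx_Amul hu1 => //; apply: approx_ofQ; rewrite mul1n adl_den_gt0.
by apply/ZhatP/(invDZhat_approx1 _ q_u); rewrite mulr0 rpred0.
Qed.

Lemma invDZhat_Aq_mul q D (w : Afin) : D%:R * q \is a Num.int -> w \in Zhat ->
  in_invDZhat D (sval (Aq q * w)).
Proof.
move=> Dq /ZhatP hw; rewrite -[D]muln1; apply: invDZhat_Amul hw.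
exact: invDZhat_approx1 Dq (approx_ofQ _ (ltn0Sn 0)).
Qed.

(** * Matrices over the finite adeles *)

Definition mk (a b c d : Afin) : mat2 := M2 (sval a) (sval b) (sval c) (sval d).

Lemma mmul_mk a b c d a' b' c' d' :
  mmul (mk a b c d) (mk a' b' c' d') =
  mk (a * a' + b * c') (a * b' + b * d') (c * a' + d * c') (c * b' + d * d').
Proof. by []. Qed.

Lemma mk_inj a b c d a' b' c' d' : mk a b c d = mk a' b' c' d' ->
  [/\ a = a', b = b', c = c' & d = d'].
Proof. by case=> /Afin_inj-> /Afin_inj-> /Afin_inj-> /Afin_inj->. Qed.

Lemma madele_mk a b c d : madele (mk a b c d).
Proof. by split; [|split; [|split]]; apply: svalP. Qed.

Lemma madeleP g : madele g -> exists a b c d, g = mk a b c d.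
Proof.
case: g => g11 g12 g21 g22 [a11 [a12 [a21 a22]]].
by exists (exist _ _ a11), (exist _ _ a12), (exist _ _ a21), (exist _ _ a22).
Qed.

Lemma adl_unitP (x : Afin) : adl_unit (sval x) <-> exists y, x * y = 1.
Proof.
split=> [[y [ay xy]]|[y xy]]; first by exists (exist _ _ ay); apply: Afin_inj.
by exists (sval y); split; [apply: svalP | rewrite -[adl_mul _ _]/(sval (x * y)) xy].
Qed.

Lemma Zhat_unitP (x : Afin) :
  Zhat_unit (sval x) <-> x \in Zhat /\ exists2 y, y \in Zhat & x * y = 1.
Proof.
split=> [[x0 [y [ay [y0 xy]]]]|[x0 [y y0 xy]]]; split; try exact/eqP.
  by exists (exist _ _ ay); [exact/eqP | apply: Afin_inj].
exists (sval y); split; first exact: svalP.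
by split; [exact/eqP | rewrite -[adl_mul _ _]/(sval (x * y)) xy].
Qed.

Lemma GL2_mk a b c d : (exists y, (a * d - b * c) * y = 1) -> GL2 (mk a b c d).
Proof. by move=> /adl_unitP det_unit; split; [apply: madele_mk|]. Qed.

Lemma KmaxP a b c d : Kmax (mk a b c d) <->
  [/\ a \in Zhat, b \in Zhat, c \in Zhat, d \in Zhat &
      exists2 v, v \in Zhat & (a * d - b * c) * v = 1].
Proof.
split=> [[_ [/eqP a0 [/eqP b0 [/eqP c0 [/eqP d0 /(Zhat_unitP (a * d - b * c))[_ det_unit]]]]]]|].
  by split=> //; apply/eqP.
move=> [/eqP a0 /eqP b0 /eqP c0 /eqP d0 det_unit]; split; first exact: madele_mk.
do 4!split=> //; apply/(Zhat_unitP (a * d - b * c)); split=> //.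
by rewrite rpredB ?rpredM //; apply/eqP.
Qed.

Lemma KN_mk N a b c d : Kmax (mk a b c d) -> a - 1 \in MZhat N -> b \in MZhat N ->
  c \in MZhat N -> d - 1 \in MZhat N -> KN N (mk a b c d).
Proof. by move=> hK /eqP ha /eqP hb /eqP hc /eqP hd. Qed.

Lemma center_mk u : (exists v, u * v = 1) -> center (mk u 0 0 u).
Proof. by move=> /adl_unitP u_unit; exists (sval u); split=> //; apply: svalP. Qed.

Lemma centerP z : center z -> exists u v, z = mk u 0 0 u /\ u * v = 1.
Proof.
case=> u [au [/(adl_unitP (exist _ _ au))[v uv] ->]].
by exists (exist _ _ au), v.
Qed.

Lemma KN_upper N u : (0 < N)%N -> u \in MZhat N -> KN N (mk 1 u 0 1).
Proof.
move=> N0 hu; apply: KN_mk; rewrite ?subrr ?MZhat0 //.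
apply/KmaxP; split; rewrite ?rpred0 ?rpred1 ?(MZhat_Zhat N0 hu) //.
by exists 1; rewrite ?rpred1 //; ring.
Qed.

Lemma KN_lower N u : (0 < N)%N -> u \in MZhat N -> KN N (mk 1 0 u 1).
Proof.
move=> N0 hu; apply: KN_mk; rewrite ?subrr ?MZhat0 //.
apply/KmaxP; split; rewrite ?rpred0 ?rpred1 ?(MZhat_Zhat N0 hu) //.
by exists 1; rewrite ?rpred1 //; ring.
Qed.

(** * The additive character *)

Section Character.
Variable R : realType.

Lemma e_D (s t : R) : e_ (s + t) = e_ s * e_ t.
Proof. by rewrite /e_ mulrDr cosD sinD; congr Complex; rewrite /= addrC. Qed.

Lemma e_0 : e_ (0 : R) = 1.
Proof. by rewrite /e_ mulr0 cos0 sin0. Qed.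

Lemma e_nat (n : nat) : e_ (n%:R : R) = 1.
Proof.
have e_1 : e_ (1 : R) = 1.
  by rewrite /e_ mulr1 -[2 * pi]/(2%:R * pi) mulr_natl cos2pi sin2pi.
by elim: n => [|n IHn]; rewrite ?e_0 // -addn1 natrD e_D IHn e_1 mulr1.
Qed.

Lemma e_int (z : int) : e_ (z%:~R : R) = 1.
Proof.
have e_N (n : nat) : e_ (- n%:R : R) * e_ n%:R = 1 by rewrite -e_D addNr e_0.
case: z => n; first exact: e_nat.
by move: (e_N n.+1); rewrite NegzE rmorphN e_nat mulr1.
Qed.

(* On ]0, 1[ the real part cos (2 pi t) = 1 - 2 sin (pi t)^2 is < 1. *)
Lemma e_neq1 (t : R) : 0 < t < 1 -> e_ t != 1.
Proof.
move=> /andP[t0 t1]; apply/eqP => -[cos1 _].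
have pi_t_gt0 : 0 < pi * t by rewrite mulr_gt0 ?pi_gt0.
have sin_gt0 : 0 < sin (pi * t).
  by apply: sin_gt0_pi; rewrite pi_t_gt0 /= -[X in _ < X]mulr1 ltr_pM2l // pi_gt0.
have : sin (pi * t) ^+ 2 = 0.
  move: cos1; rewrite -mulrA mulr_natl cos_mulr2n sin2cos2 mulr2n; lra.
by move/eqP; rewrite sqrf_eq0 gt_eqF.
Qed.

Definition eQ (q : rat) : R[i] := e_ (ratr q).

Lemma eQD a b : eQ (a + b) = eQ a * eQ b.
Proof. by rewrite /eQ rmorphD e_D. Qed.

Lemma eQ_int q : q \is a Num.int -> eQ q = 1.
Proof. by move=> /intrP[z ->]; rewrite /eQ ratr_int e_int. Qed.

Lemma eQ_shift a b : b \is a Num.int -> eQ (a + b) = eQ a.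
Proof. by move=> b_int; rewrite eQD (eQ_int b_int) mulr1. Qed.

Lemma eQX a (j : nat) : eQ a ^+ j = eQ (j%:R * a).
Proof.
elim: j => [|j IHj]; first by rewrite expr0 mul0r eQ_int ?rpred0.
by rewrite exprS IHj -eQD -addn1 natrD mulrDl mul1r addrC.
Qed.

Lemma eQ_modQ q : eQ (modQ 1 q) = eQ q.
Proof.
have /congQ1 modQ_q := modQ_congQ q (ltn0Sn 0).
by rewrite -[modQ 1 q](subrK q) addrC eQ_shift.
Qed.

Lemma eQ_eq1 q : eQ q = 1 -> q \is a Num.int.
Proof.
rewrite -eQ_modQ; have /andP[t0 t1] := modQ_itv q (ltn0Sn 0).
have [t_eq0|t_gt0] := eqVneq (modQ 1 q) 0.
  by have /congQ1 := modQ_congQ q (ltn0Sn 0); rewrite t_eq0 sub0r rpredN.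
move=> /eqP; apply: contraTT => _; apply: e_neq1.
by rewrite ltr0q lt_def t_gt0 t0 -(rmorph1 (ratr : rat -> R)) ltr_rat.
Qed.

Lemma sumr_exp_root_eq0 (F : idomainType) (w : F) (n : nat) :
  w != 1 -> w ^+ n = 1 -> \sum_(j < n) w ^+ j = 0.
Proof.
move=> w_neq1 wn1; have := subrX1 w n; rewrite wn1 subrr => /esym/eqP.
by rewrite mulf_eq0 subr_eq0 (negbTE w_neq1) => /eqP.
Qed.

Lemma sum_eQ_orth (n k a : nat) : (k < n)%N -> (a < n)%N ->
  \sum_(j < n) eQ (j%:R * (k%:R - a%:R) / n%:R) = (k == a)%:R * n%:R.
Proof.
move=> kn an; have nQ : (n%:R : rat) != 0 by rewrite pnatr_eq0 -lt0n (leq_ltn_trans _ kn).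
have [->|k_neq_a] := eqVneq k a.
  under eq_bigr => j _ do rewrite subrr mulr0 mul0r eQ_int ?rpred0 //.
  by rewrite sumr_const card_ord mul1r.
rewrite mul0r; under eq_bigr => j _ do rewrite -mulrA -eQX.
apply: sumr_exp_root_eq0; last by rewrite eQX mulrC divfK // eQ_int // rpredB ?natr_int.
apply: contra_neq k_neq_a => /eQ_eq1 kan; apply/eqP; rewrite -(eqr_nat rat); apply/eqP.
by apply: (congQ_eq (L := n)); rewrite ?ler0n ?ltr_nat.
Qed.

Lemma fourier_inversion (n : nat) (h : nat -> R[i]) :
  (forall j, (j < n)%N -> \sum_(k < n) h k * eQ (j%:R * k%:R / n%:R) = 0) ->
  forall a, (a < n)%N -> h a = 0.
Proof.
move=> hat0 a an; have nC : (n%:R : R[i]) != 0 by rewrite pnatr_eq0 -lt0n (leq_ltn_trans _ an).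
apply: (mulIf nC); rewrite mul0r.
transitivity (\sum_(k < n) h k * ((k == a :> nat)%:R * n%:R)).
  rewrite (bigD1 (Ordinal an)) //= eqxx mul1r big1 ?addr0 // => k k_neq_a.
  by rewrite -[a]/(val (Ordinal an)) (inj_eq val_inj) (negbTE k_neq_a) mul0r mulr0.
under eq_bigr => k _ do rewrite -(sum_eQ_orth (ltn_ord k) an) mulr_sumr.
rewrite exchange_big big1 //= => j _.
transitivity ((\sum_(k < n) h k * eQ (j%:R * k%:R / n%:R)) * eQ (- (j%:R * a%:R / n%:R))).
  rewrite mulr_suml; apply: eq_bigr => k _; rewrite -[RHS]mulrA -eQD; congr (_ * eQ _).
  by field; rewrite pnatr_eq0 -lt0n (leq_ltn_trans _ an).
by rewrite hat0 ?mul0r.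
Qed.

Lemma fourier_inversion2 (n : nat) (F : nat -> nat -> R[i]) :
  (forall j1 j2, (j1 < n)%N -> (j2 < n)%N ->
    \sum_(k1 < n) \sum_(k2 < n)
      F k1 k2 * (eQ (j1%:R * k1%:R / n%:R) * eQ (j2%:R * k2%:R / n%:R)) = 0) ->
  forall a1 a2, (a1 < n)%N -> (a2 < n)%N -> F a1 a2 = 0.
Proof.
move=> hat0 a1 a2 a1n a2n; apply: (fourier_inversion (h := F a1)) a2n => j2 j2n.
pose h k1 := \sum_(k2 < n) F k1 k2 * eQ (j2%:R * k2%:R / n%:R).
apply: (fourier_inversion (h := h)) a1n => j1 j1n.
rewrite -[RHS](hat0 j1 j2 j1n j2n); apply: eq_bigr => k1 _; rewrite mulr_suml.
by apply: eq_bigr => k2 _; rewrite -[LHS]mulrA; congr (_ * _); apply: mulrC.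
Qed.

End Character.

(** * Kloosterman sums at the level *)

(* n(-t1) w n(t2) with w = [[0, -C], [1, 0]]. *)
Definition kmat (C t1 t2 : Afin) : mat2 := mk (- t1) (- C - t1 * t2) 1 t2.

Lemma nwn_kmat c (t1 t2 : Afin) :
  mmul (nmat (adl_opp (sval t1))) (mmul (wmat c) (nmat (sval t2))) =
  kmat (Aq (c ^- 2)) t1 t2.
Proof.
change (mmul (mk 1 (- t1) 0 1) (mmul (mk 0 (- Aq (c ^- 2)) 1 0) (mk 1 t2 0 1)) =
  kmat (Aq (c ^- 2)) t1 t2).
by rewrite !mmul_mk; congr mk; ring.
Qed.

Lemma Aq_unit q : q != 0 -> exists v, Aq q * v = 1.
Proof. by move=> q0; exists (Aq q^-1); rewrite -rmorphM mulfV ?rmorph1. Qed.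

Lemma expVn2_neq0 (c : rat) : c != 0 -> c ^- 2 != 0.
Proof. by move=> c0; rewrite invr_eq0 expf_neq0. Qed.

Lemma GL2_kmat C t1 t2 : (exists v, C * v = 1) -> GL2 (kmat C t1 t2).
Proof. by move=> [v Cv]; apply: GL2_mk; exists v; rewrite -[RHS]Cv; congr (_ * _); ring. Qed.

Lemma kmat_scalar s u : s * u = 1 -> kmat (s * s) (- s) s = mmul (mk s 0 0 s) (mk 1 0 u 1).
Proof. by move=> su; rewrite mmul_mk /kmat su; congr mk; ring. Qed.

(* Entrywise, kmat C t1 t2 = a(y)^-1 u k a(y) with k = [[a, b], [c, d]] of
   determinant 1/v; comparing determinants gives u^2 = C v. *)
Lemma kmat_conj_coords (T : comPzRingType) (C t1 t2 u a b c d yi y v : T) :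
  yi * y = 1 -> (a * d - b * c) * v = 1 ->
  - t1 = yi * u * a * y -> - C - t1 * t2 = yi * u * b -> 1 = u * c * y -> t2 = u * d ->
  t1 = C * y * (- (v * c * a)) /\ t2 = C * y * (v * c * d).
Proof.
move=> yy1 det_v e11 e12 e21 e22.
have detC : C = yi * y * u ^+ 2 * (a * d - b * c).
  transitivity ((- t1) * t2 - (- C - t1 * t2) * (u * c * y)); first by rewrite -e21; ring.
  by rewrite e12 e11 e22; ring.
have u2 : u ^+ 2 = C * v.
  transitivity (u ^+ 2 * (yi * y) * ((a * d - b * c) * v)); first by rewrite yy1 det_v; ring.
  by rewrite detC; ring.
have def_u : u = C * v * c * y.
  transitivity (u * (u * c * y)); first by rewrite -e21; ring.
  by rewrite -mulrA mulrA -expr2 u2; ring.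
split; last by rewrite e22 def_u; ring.
transitivity (- (yi * u * a * y)); first by rewrite -e11 opprK.
transitivity (- (u * a) * (yi * y)); first ring.
by rewrite yy1 def_u; ring.
Qed.


Lemma psi_fin_Aq (R : realType) q : psi_fin R (sval (Aq q)) = eQ R q.
Proof. exact: eQ_modQ. Qed.

Lemma psi_fin_addZhat (R : realType) (x w : Afin) : w \in Zhat ->
  psi_fin R (sval (x + w)) = psi_fin R (sval x).
Proof.
move=> /eqP w0; rewrite /psi_fin /= /adl_add w0 addr0 modQ_id //.
exact: adele_itv (svalP x).
Qed.

Definition kloost_integrand (R : realType) (f : mat2 -> R[i]) (c m1 m2 : rat)
    (t1 t2 : adl) : R[i] :=
  f (mmul (nmat (adl_opp t1)) (mmul (wmat c) (nmat t2))) *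
  psi_fin R (adl_sub (adl_mul (ofQ m1) t1) (adl_mul (ofQ m2) t2)).

Section KmatSupport.
Variables (R : realType) (f : mat2 -> R[i]) (y : rat).
Hypotheses (y0 : y != 0) (fsupp : forall g, GL2 g -> f g != 0 ->
  exists z k, center z /\ Kmax k /\ g = mmul (amat y^-1) (mmul z (mmul k (amat y)))).

Lemma kmat_support C t1 t2 : (exists v, C * v = 1) -> f (kmat C t1 t2) != 0 ->
  exists w1 w2, [/\ w1 \in Zhat, w2 \in Zhat, t1 = C * Aq y * w1 & t2 = C * Aq y * w2].
Proof.
move=> C_unit /(fsupp (GL2_kmat t1 t2 C_unit)) [z [k [/centerP[u [uv [-> _]]] [hk]]]].
have [a [b [c [d def_k]]]] := madeleP (proj1 hk); move: hk; rewrite def_k.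
move=> /KmaxP[a1 b1 c1 d1 [v v1 det_v]].
rewrite -[amat y]/(mk (Aq y) 0 0 1) -[amat y^-1]/(mk (Aq y^-1) 0 0 1) !mmul_mk.
move=> /mk_inj[e11 e12 e21 e22].
have yy1 : Aq y^-1 * Aq y = 1 by rewrite -rmorphM mulVf ?rmorph1.
have e11' : - t1 = Aq y^-1 * u * a * Aq y by rewrite e11; ring.
have e12' : - C - t1 * t2 = Aq y^-1 * u * b by rewrite e12; ring.
have e21' : 1 = u * c * Aq y by rewrite e21; ring.
have e22' : t2 = u * d by rewrite e22; ring.
have [-> ->] := kmat_conj_coords yy1 det_v e11' e12' e21' e22'.
exists (- (v * c * a)), (v * c * d); split=> //; first by rewrite rpredN !rpredM.
by rewrite !rpredM.
Qed.

Lemma integrand_support c m1 m2 D (t1 t2 : Afin) : c != 0 ->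
  D%:R * (c ^- 2 * y) \is a Num.int ->
  kloost_integrand f c m1 m2 (sval t1) (sval t2) != 0 ->
  in_invDZhat D (sval t1) /\ in_invDZhat D (sval t2).
Proof.
move=> c0 Dcy nz; have fnz : f (kmat (Aq (c ^- 2)) t1 t2) != 0.
  by rewrite -nwn_kmat; apply: contraNneq nz => fz; rewrite /kloost_integrand fz mul0r.
have [w1 [w2 [w1Z w2Z -> ->]]] := kmat_support (Aq_unit (expVn2_neq0 c0)) fnz.
by rewrite -!rmorphM; split; apply: invDZhat_Aq_mul.
Qed.

End KmatSupport.

Section Level.
Variables (R : realType) (f : mat2 -> R[i]) (N : nat).
Hypotheses (N0 : (0 < N)%N) (fKN : bi_inv (KN N) f)
  (fZ : forall z g, center z -> GL2 g -> f (mmul z g) = f g).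

Lemma kmat_translate C t1 t2 u1 u2 : (exists v, C * v = 1) ->
  u1 \in MZhat N -> u2 \in MZhat N ->
  f (kmat C (t1 + u1) (t2 + u2)) = f (kmat C t1 t2).
Proof.
move=> C_unit u1N u2N.
have -> : kmat C (t1 + u1) (t2 + u2) = mmul (mk 1 (- u1) 0 1) (mmul (kmat C t1 t2) (mk 1 u2 0 1)).
  by rewrite !mmul_mk; congr mk; ring.
by apply: fKN; [apply: GL2_kmat | apply/KN_upper/MZhatN | apply: KN_upper].
Qed.

Lemma f_kmat_scalar s :
  s * Aq N%:R = 1 -> f (kmat (s * s) (- s) s) = f mat1.
Proof.
move=> sN; rewrite (kmat_scalar sN) fZ; first last.
- by apply: GL2_mk; exists 1; ring.
- by apply: center_mk; exists (Aq N%:R).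
have -> : mk 1 0 (Aq N%:R) 1 = mmul (mk 1 0 (Aq N%:R) 1) (mmul (mk 1 0 0 1) (mk 1 0 0 1)).
  by rewrite !mmul_mk; congr mk; ring.
have K1 : KN N (mk 1 0 0 1) by apply: KN_upper; rewrite ?MZhat0.
apply: fKN K1 => //; last by apply: KN_lower => //; have := Aq_MZhat 1 N0; rewrite mulr1.
by apply: GL2_mk; exists 1; ring.
Qed.

Lemma integrand_translate c m1 m2 (t1 t2 u1 u2 : Afin) : c != 0 ->
  N%:R * m1 \is a Num.int -> N%:R * m2 \is a Num.int ->
  u1 \in MZhat N -> u2 \in MZhat N ->
  kloost_integrand f c m1 m2 (sval (t1 + u1)) (sval (t2 + u2)) =
  kloost_integrand f c m1 m2 (sval t1) (sval t2).
Proof.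
move=> c0 m1N m2N u1N u2N; rewrite /kloost_integrand !nwn_kmat.
rewrite (kmat_translate t1 t2 (Aq_unit (expVn2_neq0 c0)) u1N u2N); congr (_ * _).
change (psi_fin R (sval (Aq m1 * (t1 + u1) - Aq m2 * (t2 + u2))) =
  psi_fin R (sval (Aq m1 * t1 - Aq m2 * t2))).
have -> : Aq m1 * (t1 + u1) - Aq m2 * (t2 + u2) =
    (Aq m1 * t1 - Aq m2 * t2) + (Aq m1 * u1 - Aq m2 * u2) by ring.
rewrite psi_fin_addZhat //.
by rewrite rpredB // (Aq_mul_MZhat_Zhat N0).
Qed.

(* n(1/N) w(N) n(1/N) = N^-1 [[1, 0], [N, 1]] lies in Z K(N). *)
Lemma f_at_unit_point t1 t2 : congQ N t1 (- N%:R^-1) -> congQ N t2 N%:R^-1 ->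
  f (mmul (nmat (adl_opp (ofQ t1))) (mmul (wmat N%:R) (nmat (ofQ t2)))) = f mat1.
Proof.
move=> /(congQP _ _ N0)[z1 ->] /(congQP _ _ N0)[z2 ->].
have NQ : (N%:R : rat) != 0 by rewrite pnatr_eq0 -lt0n.
rewrite (nwn_kmat _ (Aq _) (Aq _)) !rmorphD kmat_translate ?Aq_MZhat //.
  2: exact/Aq_unit/expVn2_neq0.
have -> : Aq (N%:R ^- 2) = Aq N%:R^-1 * Aq N%:R^-1 by rewrite -rmorphM -expr2 exprVn.
by rewrite rmorphN f_kmat_scalar // -rmorphM mulVf // rmorph1.
Qed.

End Level.

Section Admissible.
Variables (R : realType) (f : mat2 -> R[i]) (N : nat) (y : rat).
Hypotheses (fZ : forall z g, center z -> GL2 g -> f (mmul z g) = f g)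
  (N0 : (0 < N)%N) (fKN : bi_inv (KN N) f) (y0 : 0 < y)
  (fsupp : forall g, GL2 g -> f g != 0 ->
     exists z k, center z /\ Kmax k /\ g = mmul (amat y^-1) (mmul z (mmul k (amat y))))
  (f1 : f mat1 != 0).

(* D N^-2 y is an integer (this gives the support condition) and 1/N = E/D;
   the Haar integral is a Riemann sum over the n = N D points of D^-1 Z / N Z. *)
Let E : nat := (N * `|denq y|)%N.
Let D : nat := (N * E)%N.
Let n : nat := (N * D)%N.

Let F (k1 k2 : nat) : R[i] :=
  f (mmul (nmat (adl_opp (ofQ (k1%:R / D%:R)))) (mmul (wmat N%:R) (nmat (ofQ (k2%:R / D%:R))))).

Let S (j1 j2 : nat) : R[i] := \sum_(k1 < n) \sum_(k2 < n)
  F k1 k2 * (eQ R (j1%:R * k1%:R / n%:R) * eQ R (j2%:R * k2%:R / n%:R)).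

Let NQ : (N%:R : rat) != 0. Proof. by rewrite pnatr_eq0 -lt0n. Qed.
Let dQ : (`|denq y|%:R : rat) != 0. Proof. by rewrite pnatr_eq0 absz_eq0 denq_neq0. Qed.
Let E0 : (0 < E)%N. Proof. by rewrite muln_gt0 N0 absz_gt0 denq_neq0. Qed.
Let D0 : (0 < D)%N. Proof. by rewrite muln_gt0 N0 E0. Qed.
Let DQ : (D%:R : rat) != 0. Proof. by rewrite pnatr_eq0 -lt0n D0. Qed.
Let nQ : (n%:R : rat) = N%:R * D%:R. Proof. exact: natrM. Qed.

Let DNy : D%:R * (N%:R ^- 2 * y) \is a Num.int.
Proof.
suff -> : D%:R * (N%:R ^- 2 * y) = (numq y)%:~R by apply: intr_int.
by rewrite [in RHS]numqE /D /E !natrM natr_absz gtr0_norm ?denq_gt0 //; field.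
Qed.

Lemma kloosterman_at_level j1 j2 :
  Kloosterman f (j1%:R / N%:R) (- (j2%:R / N%:R)) N%:R ((N ^ 2)%:R^-1 * S j1 j2).
Proof.
have Nm (j : nat) : (N%:R : rat) * (j%:R / N%:R) \is a Num.int.
  by rewrite mulrCA mulfV // mulr1 natr_int.
exists N, D; do 2![split; first by []]; split; [|split].
- move=> t1 t2 u1 u2 a1 a2 b1 b2 /eqP u1N /eqP u2N.
  have m2N : (N%:R : rat) * - (j2%:R / N%:R) \is a Num.int by rewrite mulrN rpredN.
  exact: (integrand_translate N0 fKN (exist _ t1 a1) (exist _ t2 a2)
    (u1 := exist _ u1 b1) (u2 := exist _ u2 b2) NQ (Nm j1) m2N u1N u2N).
- move=> t1 t2 a1 a2.
  exact: (integrand_support (lt0r_neq0 y0) fsupp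
    (t1 := exist _ t1 a1) (t2 := exist _ t2 a2) NQ DNy).
- congr (_ * _); apply: eq_bigr => k1 _; apply: eq_bigr => k2 _; congr (_ * _).
  change (eQ R (j1%:R * k1%:R / n%:R) * eQ R (j2%:R * k2%:R / n%:R) =
    psi_fin R (sval (Aq (j1%:R / N%:R) * Aq (k1%:R / D%:R) -
                     Aq (- (j2%:R / N%:R)) * Aq (k2%:R / D%:R)))).
  rewrite -2!(rmorphM Aq) -(rmorphB Aq) psi_fin_Aq -eQD; apply: congr1.
  by rewrite nQ; field; rewrite NQ DQ.
Qed.

Lemma F_unit_point : F (n - E) (E %% n) = f mat1.
Proof.
have En : (E <= n)%N by rewrite /n /D mulnA leq_pmull // muln_gt0 N0.
apply: f_at_unit_point => //; apply/(congQP _ _ N0).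
  exists 1; rewrite natrB // /n /D /E !natrM; field.
  by rewrite NQ dQ.
exists (- (E %/ n)%:Z); have /(congr1 (fun m => m%:R : rat)) := divn_eq E n.
rewrite natrD natrM => defE; rewrite -[(E %% n)%:R](addKr ((E %/ n)%:R * n%:R)) -defE.
by rewrite mulrNz /n /D /E !natrM; field; rewrite NQ dQ.
Qed.

Lemma admissible_level : admissible f N%:R.
Proof.
split; first by rewrite ltr0n.
have [j1 [j2 Sj]] : exists j1 j2, S j1 j2 != 0.
  have [//|none] := pselect (exists j1 j2, S j1 j2 != 0).
  have S0 j1 j2 : S j1 j2 = 0.
    by apply/eqP; apply/negPn/negP => Sj; apply: none; exists j1, j2.
  have n0 : (0 < n)%N by rewrite muln_gt0 N0 D0.
  have a1n : (n - E < n)%N by rewrite ltn_subrL E0 n0.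
  move: f1; rewrite -F_unit_point (fourier_inversion2 (F := F) _ a1n (ltn_pmod E n0)) ?eqxx //.
  by move=> j1 j2 _ _; apply: S0.
exists (j1%:R / N%:R), (- (j2%:R / N%:R)), ((N ^ 2)%:R^-1 * S j1 j2).
split; first exact: kloosterman_at_level.
by rewrite mulf_neq0 // invr_eq0 pnatr_eq0 expn_eq0 negb_and -lt0n N0.
Qed.

End Admissible.

Theorem corollary3p8 (R : realType) (f : mat2 -> R[i]) (N : nat) (k : rat) :
  in_Hfin f -> has_level f N -> geom_i f -> geom_ii f ->
  f mat1 != 0 ->
  geom_conductor f k ->
  in_Z (N%:R / k).
Proof.
move=> [fZ _] [N0 [fKN _]] _ [y [y0 fsupp]] f1 [[_ k_divides] _].
exact/k_divides/(admissible_level fZ N0 fKN y0 fsupp f1).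
Qed.
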